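(* Let $f$ be a homeomorphism of a compact metric space $(X,d)$ such that: (1) for every $\epsilon>0$ there is $\delta>0$ such that $d(a,b)<\delta$ implies $W^s_\epsilon(a)\cap W^u_\epsilon(b)\ne\emptyset$; and (2) for every $x\in X$ there is $c>0$ with $W^s_c(x)=\{x\}$. Then $X$ is finite.
   Context: $W^s_\epsilon(x)=\{y\in X: d(f^n(x),f^n(y))\le\epsilon\ \forall n\ge0\}$ and $W^u_\epsilon(x)=\{y\in X: d(f^{-n}(x),f^{-n}(y))\le\epsilon\ \forall n\ge0\}$. *)

From Stdlib Require Import Reals List.
Open Scope R_scope.

Definition is_metric {X : Type} (d : X -> X -> R) : Prop :=
  (forall x y, 0 <= d x y) /\
  (forall x y, d x y = 0 <-> x = y) /\
  (forall x y, d x y = d y x) /\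
  (forall x y z, d x z <= d x y + d y z).

Definition is_open {X : Type} (d : X -> X -> R) (U : X -> Prop) : Prop :=
  forall x, U x -> exists r, 0 < r /\ forall y, d x y < r -> U y.

Definition is_compact {X : Type} (d : X -> X -> R) : Prop :=
  forall (I : Type) (U : I -> X -> Prop),
    (forall i, is_open d (U i)) ->
    (forall x, exists i, U i x) ->
    exists l : list I, forall x, exists i, In i l /\ U i x.

Definition continuous_map {X : Type} (d : X -> X -> R) (f : X -> X) : Prop :=
  forall x eps, 0 < eps ->
    exists delta, 0 < delta /\ forall y, d x y < delta -> d (f x) (f y) < eps.

Definition homeo_with_inverse {X : Type} (d : X -> X -> R) (f g : X -> X) : Prop :=
  (forall x, g (f x) = x) /\ (forall x, f (g x) = x) /\
  continuous_map d f /\ continuous_map d g.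

Definition Ws {X : Type} (d : X -> X -> R) (f : X -> X) (eps : R) (x : X) : X -> Prop :=
  fun y => forall n : nat, d (Nat.iter n f x) (Nat.iter n f y) <= eps.

Definition Wu {X : Type} (d : X -> X -> R) (finv : X -> X) (eps : R) (x : X) : X -> Prop :=
  fun y => forall n : nat, d (Nat.iter n finv x) (Nat.iter n finv y) <= eps.

Definition finite_type (X : Type) : Prop := exists l : list X, forall x, In x l.

From Stdlib Require Import Reals List.
From Stdlib Require Import Lra Lia Classical ClassicalEpsilon.
Open Scope R_scope.

(* If d(z,u) is small, hypothesis (1) yields a point of W^s_c(z), hence z
   itself by (2), inside W^u_e(u): a ball around z lies in the local unstable
   set of z, i.e. the backward iterates are equicontinuous at every point, and
   by compactness uniformly so.  Pigeonholing a finite cover along the forward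
   orbits of x and y returns both orbits, at some time j, near points whose
   backward orbits shadow those at time i; pulling back by f^-(j-m) shows that
   d(f^m x, f^m y) exceeds a backward distance d(f^-t x, f^-t y) by at most a
   small error.  Hence points near x stay c-close to x forever, so they lie in
   W^s_c(x) = {x}: every point is isolated, and a compact space of isolated
   points is finite. *)

Lemma pigeonhole {T : Type} (l : list T) (R : nat -> T -> Prop) :
  (forall k, exists t, In t l /\ R k t) ->
  exists i j t, (i < j)%nat /\ R i t /\ R j t.
Proof.
  intros Hcell.
  destruct (choice _ Hcell) as [h Hh].
  set (s := map h (seq 0 (S (length l)))).
  assert (Hdup : ~ NoDup s).
  { intro Hnd.
    assert (Hincl : incl s l).
    { intros a Ha. unfold s in Ha. apply in_map_iff in Ha.
      destruct Ha as [k [<- _]]. apply Hh. }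
    pose proof (NoDup_incl_length Hnd Hincl) as Hlen.
    unfold s in Hlen. rewrite length_map, length_seq in Hlen. lia. }
  rewrite (NoDup_nth s (h 0%nat)) in Hdup.
  apply not_all_ex_not in Hdup as [i Hdup].
  apply not_all_ex_not in Hdup as [j Hdup].
  unfold s in Hdup. rewrite length_map, length_seq in Hdup.
  assert (Hij : exists Hi : (i < S (length l))%nat, exists Hj : (j < S (length l))%nat,
            h i = h j /\ i <> j).
  { apply NNPP. intro Hno. apply Hdup. intros Hi Hj Heq.
    apply NNPP. intro Hne. apply Hno. exists Hi, Hj. split; [|exact Hne].
    rewrite !(map_nth h (seq 0 (S (length l))) 0%nat), !seq_nth in Heq; auto. }
  destruct Hij as [_ [_ [Heq Hne]]].
  destruct (Nat.lt_gt_cases i j) as [[Hlt | Hgt] _]; [exact Hne| |].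
  - exists i, j, (h i). split; [exact Hlt|]. split; [apply Hh|]. rewrite Heq. apply Hh.
  - exists j, i, (h i). split; [exact Hgt|]. split; [rewrite Heq|]; apply Hh.
Qed.

Lemma iter_cancel {X : Type} (f g : X -> X) :
  (forall x, g (f x) = x) ->
  forall k t x, Nat.iter k g (Nat.iter (k + t) f x) = Nat.iter t f x.
Proof.
  intros Hgf k. induction k as [|k IHk]; intros t x; [reflexivity|].
  rewrite Nat.iter_succ_r. replace (S k + t)%nat with (S (k + t)) by lia.
  rewrite Nat.iter_succ, Hgf. apply IHk.
Qed.

Section CompactMetric.

Variables (X : Type) (d : X -> X -> R).
Hypothesis Hmet : is_metric d.

Lemma is_open_ball (Q : Prop) (z : X) (r : R) : is_open d (fun u => Q /\ d z u < r).
Proof.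
  destruct Hmet as [_ [_ [_ Htri]]].
  intros u [HQ Hu]. exists (r - d z u). split; [lra|].
  intros y Hy. split; [exact HQ|]. specialize (Htri z u y). lra.
Qed.

Lemma compact_ball_cover (P : X -> R -> Prop) :
  is_compact d ->
  (forall x, exists r, 0 < r /\ P x r) ->
  exists l : list (X * R),
    forall u, exists p, In p l /\ P (fst p) (snd p) /\ d (fst p) u < snd p.
Proof.
  intros Hcpt Hball.
  apply (Hcpt (X * R)%type (fun p u => P (fst p) (snd p) /\ d (fst p) u < snd p)).
  - intros p. apply is_open_ball.
  - intros u. destruct (Hball u) as [r [Hr HP]]. exists (u, r). simpl.
    split; [exact HP|]. destruct Hmet as [_ [Hzero _]].
    rewrite (proj2 (Hzero u u) eq_refl). exact Hr.
Qed.

Lemma finite_of_isolated :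
  is_compact d ->
  (forall x, exists r, 0 < r /\ forall y, d x y < r -> y = x) ->
  finite_type X.
Proof.
  intros Hcpt Hiso.
  destruct (compact_ball_cover _ Hcpt Hiso) as [l Hl].
  exists (map fst l). intros x.
  destruct (Hl x) as [p [Hin [Hp Hd]]].
  rewrite (Hp x Hd). apply in_map. exact Hin.
Qed.

Lemma Wu_sym (g : X -> X) e u v : Wu d g e u v -> Wu d g e v u.
Proof.
  destruct Hmet as [_ [_ [Hsym _]]]. intros H n. rewrite Hsym. apply H.
Qed.

Lemma Wu_trans (g : X -> X) e e' u v w :
  Wu d g e u v -> Wu d g e' v w -> Wu d g (e + e') u w.
Proof.
  destruct Hmet as [_ [_ [_ Htri]]]. intros Huv Hvw n.
  specialize (Htri (Nat.iter n g u) (Nat.iter n g v) (Nat.iter n g w)).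
  specialize (Huv n). specialize (Hvw n). lra.
Qed.

End CompactMetric.

Lemma Wu_iter_shift {X : Type} (d : X -> X -> R) (f g : X -> X) e w i t m :
  (forall x, g (f x) = x) ->
  Wu d g e (Nat.iter i f w) (Nat.iter (i + t + m) f w) ->
  d (Nat.iter t g w) (Nat.iter m f w) <= e.
Proof.
  intros Hgf Hw. specialize (Hw (i + t)%nat).
  assert (Hback : Nat.iter (i + t) g (Nat.iter i f w) = Nat.iter t g w).
  { rewrite Nat.add_comm, Nat.iter_add. f_equal.
    pose proof (iter_cancel f g Hgf i 0 w) as H0. rewrite Nat.add_0_r in H0. exact H0. }
  rewrite Hback, iter_cancel in Hw by exact Hgf.
  exact Hw.
Qed.

Section BackwardEquicontinuous.

Variables (X : Type) (d : X -> X -> R) (f g : X -> X).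
Hypothesis Hmet : is_metric d.
Hypothesis Hcpt : is_compact d.
Hypothesis Hgf : forall x, g (f x) = x.
Hypothesis Hstable : forall z e, 0 < e ->
  exists r, 0 < r /\ forall u, d z u < r -> Wu d g e u z.

Lemma return_times e x y s : 0 < e ->
  exists i j, (i + s <= j)%nat /\
    Wu d g (e + e) (Nat.iter i f x) (Nat.iter j f x) /\
    Wu d g (e + e) (Nat.iter i f y) (Nat.iter j f y).
Proof.
  intros He.
  destruct (compact_ball_cover X d Hmet (fun z r => forall u, d z u < r -> Wu d g e u z)
              Hcpt (fun z => Hstable z e He)) as [l Hl].
  set (cell := fun (p : X * R) w =>
         (forall u, d (fst p) u < snd p -> Wu d g e u (fst p)) /\ d (fst p) w < snd p).
  destruct (pigeonhole (list_prod l l)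
              (fun k pq => cell (fst pq) (Nat.iter (k * s) f x) /\
                           cell (snd pq) (Nat.iter (k * s) f y)))
    as [k [k' [[p q] [Hkk' [[Hxp Hyq] [Hxp' Hyq']]]]]].
  - intros k.
    destruct (Hl (Nat.iter (k * s) f x)) as [p [Hp Hcp]].
    destruct (Hl (Nat.iter (k * s) f y)) as [q [Hq Hcq]].
    exists (p, q). split; [apply in_prod; assumption|]. split; assumption.
  - assert (Hsame : forall p u v, cell p u -> cell p v -> Wu d g (e + e) u v).
    { intros p0 u v [Hp0 Hu] [_ Hv].
      apply (Wu_trans X d Hmet g e e u (fst p0) v); [|apply Wu_sym; auto]; auto. }
    exists (k * s)%nat, (k' * s)%nat. split; [nia|].
    split; eapply Hsame; eassumption.
Qed.

Lemma forward_dist_le_backward x y m e : 0 < e ->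
  exists t, d (Nat.iter m f x) (Nat.iter m f y) <= d (Nat.iter t g x) (Nat.iter t g y) + e.
Proof.
  intros He.
  destruct (return_times (e / 4) x y m) as [i [j [Hij [Hx Hy]]]]; [lra|].
  exists (j - i - m)%nat.
  replace j with (i + (j - i - m) + m)%nat in Hx, Hy by lia.
  pose proof (Wu_iter_shift d f g _ x _ _ _ Hgf Hx) as Hx'.
  pose proof (Wu_iter_shift d f g _ y _ _ _ Hgf Hy) as Hy'.
  set (t := (j - i - m)%nat) in *.
  destruct Hmet as [_ [_ [Hsym Htri]]].
  pose proof (Htri (Nat.iter m f x) (Nat.iter t g x) (Nat.iter m f y)) as T1.
  pose proof (Htri (Nat.iter t g x) (Nat.iter t g y) (Nat.iter m f y)) as T2.
  pose proof (Hsym (Nat.iter t g x) (Nat.iter m f x)). lra.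
Qed.

Lemma isolated_of_trivial_stable_sets :
  (forall x, exists c, 0 < c /\ forall y, Ws d f c x y -> y = x) ->
  forall x, exists r, 0 < r /\ forall y, d x y < r -> y = x.
Proof.
  intros Hstab_triv x.
  destruct (Hstab_triv x) as [c [Hc Hsingleton]].
  destruct (Hstable x (c / 2)) as [r [Hr Hball]]; [lra|].
  exists r. split; [exact Hr|]. intros y Hy. apply Hsingleton. intros n.
  destruct (forward_dist_le_backward x y n (c / 2)) as [t Ht]; [lra|].
  pose proof (Wu_sym X d Hmet g _ _ _ (Hball y Hy) t). lra.
Qed.

End BackwardEquicontinuous.

Lemma unstable_set_contains_ball {X : Type} (d : X -> X -> R) (f g : X -> X) :
  (forall eps, 0 < eps -> exists delta, 0 < delta /\
     forall a b, d a b < delta -> exists z, Ws d f eps a z /\ Wu d g eps b z) ->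
  (forall x, exists c, 0 < c /\ forall y, Ws d f c x y -> y = x) ->
  forall z e, 0 < e -> exists r, 0 < r /\ forall u, d z u < r -> Wu d g e u z.
Proof.
  intros Hprod Hstab_triv z e He.
  destruct (Hstab_triv z) as [c [Hc Hsingleton]].
  destruct (Hprod (Rmin e c)) as [r [Hr Hint]]; [apply Rmin_glb_lt; assumption|].
  exists r. split; [exact Hr|]. intros u Hu.
  destruct (Hint z u Hu) as [w [Hs Hw]].
  assert (Hwz : w = z).
  { apply Hsingleton. intros n. pose proof (Rmin_r e c). specialize (Hs n). lra. }
  subst w. intros n. pose proof (Rmin_l e c). specialize (Hw n). lra.
Qed.

Theorem mainTheorem17 (X : Type) (d : X -> X -> R) (f g : X -> X)
  (Hmet : is_metric d) (Hcpt : is_compact d) (Hhomeo : homeo_with_inverse d f g)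
  (H1 : forall eps, 0 < eps -> exists delta, 0 < delta /\
          forall a b, d a b < delta -> exists z, Ws d f eps a z /\ Wu d g eps b z)
  (H2 : forall x, exists c, 0 < c /\ forall y, Ws d f c x y <-> y = x) :
  finite_type X.
Proof.
  destruct Hhomeo as [Hgf _].
  assert (Hstab_triv : forall x, exists c, 0 < c /\ forall y, Ws d f c x y -> y = x).
  { intros x. destruct (H2 x) as [c [Hc Hiff]]. exists c. split; [exact Hc|].
    intros y. apply Hiff. }
  apply (finite_of_isolated X d Hmet Hcpt).
  apply (isolated_of_trivial_stable_sets X d f g Hmet Hcpt Hgf); [|exact Hstab_triv].
  exact (unstable_set_contains_ball d f g H1 Hstab_triv).
Qed.
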